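(* Every flexible C-loop is an ARIF loop, i.e. it satisfies $(zx)(yxy)=(z(xyx))y$ for all $x,y,z$.
   Context: A C-loop is a loop satisfying $x(y(yz))=((xy)y)z$ for all $x,y,z$. A loop is flexible if $(xy)x=x(yx)$ for all $x,y$ (so expressions such as $xyx$ are unambiguous). An ARIF loop is a flexible loop satisfying $(zx)(yxy)=(z(xyx))y$ for all $x,y,z$. *)

Definition is_loop {L : Type} (mul : L -> L -> L) (e : L) : Prop :=
  (forall x, mul e x = x /\ mul x e = x) /\
  (forall a b : L, exists x, mul a x = b /\ forall x', mul a x' = b -> x' = x) /\
  (forall a b : L, exists y, mul y a = b /\ forall y', mul y' a = b -> y' = y).

Definition is_C_loop {L : Type} (mul : L -> L -> L) (e : L) : Prop :=
  is_loop mul e /\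
  forall x y z, mul x (mul y (mul y z)) = mul (mul (mul x y) y) z.

Definition is_flexible {L : Type} (mul : L -> L -> L) (e : L) : Prop :=
  is_loop mul e /\ forall x y, mul (mul x y) x = mul x (mul y x).

(* ARIF loop: flexible loop with (zx)(yxy) = (z(xyx))y;
   xyx denotes (xy)x, unambiguous by flexibility. *)
Definition is_ARIF_loop {L : Type} (mul : L -> L -> L) (e : L) : Prop :=
  is_flexible mul e /\
  forall x y z, mul (mul z x) (mul (mul y x) y) = mul (mul z (mul (mul x y) x)) y.

(* In a C-loop the inverse property holds and squares are nuclear.  Put
   p = (xy)(xy).  From xy = (xy)^-1 p = p (xy)^-1 and flexibility we get
   yxy = x^-1 p and xyx = p y^-1; nuclearity of p then reduces
   both sides of the ARIF identity to zp. *)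

From Stdlib Require Import ClassicalEpsilon.

Section CLoop.

Variables (L : Type) (mul : L -> L -> L) (e : L) (inv : L -> L).

Hypothesis mul1l : forall x, mul e x = x.
Hypothesis mul1r : forall x, mul x e = x.
Hypothesis left_div : forall a b, exists x, mul a x = b.
Hypothesis right_div : forall a b, exists y, mul y a = b.
Hypothesis C_law : forall x y z, mul x (mul y (mul y z)) = mul (mul (mul x y) y) z.
Hypothesis mulV : forall x, mul x (inv x) = e.

Lemma mulKr u y : mul (mul u y) (inv y) = u.
Proof.
  destruct (right_div y u) as [x <-].
  rewrite <- C_law, mulV, !mul1r. reflexivity.
Qed.

Lemma mulKl y w : mul (inv y) (mul y w) = w.
Proof.
  destruct (right_div y e) as [l Hl].
  assert (Hlw : forall w, mul l (mul y w) = w).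
  { intro w'. destruct (left_div y w') as [z <-].
    rewrite C_law, Hl, mul1l. reflexivity. }
  assert (Hinv : l = inv y) by (rewrite <- (Hlw (inv y)), mulV, mul1r; reflexivity).
  rewrite <- Hinv. apply Hlw.
Qed.

Lemma mulVl x : mul (inv x) x = e.
Proof. rewrite <- (mul1r x) at 2. apply mulKl. Qed.

Lemma invK x : inv (inv x) = x.
Proof. rewrite <- (mul1r (inv (inv x))), <- (mulVl x), mulKl. reflexivity. Qed.

Lemma mulKVr u y : mul (mul u (inv y)) y = u.
Proof. rewrite <- (invK y) at 2. apply mulKr. Qed.

Lemma mulKVl y w : mul y (mul (inv y) w) = w.
Proof. rewrite <- (invK y) at 1. apply mulKl. Qed.

Lemma invM x y : inv (mul x y) = mul (inv y) (inv x).
Proof.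
  assert (Hy : mul (inv (mul x y)) x = inv y).
  { rewrite <- (mulKr x y) at 2. apply mulKl. }
  rewrite <- Hy, mulKr. reflexivity.
Qed.

Definition middle_nuclear (s : L) : Prop :=
  forall a b, mul (mul a s) b = mul a (mul s b).

Lemma square_middle_nuclear y : middle_nuclear (mul y y).
Proof.
  intros a b.
  assert (Hleft : mul y (mul y b) = mul (mul y y) b).
  { rewrite <- (mul1l (mul y (mul y b))), C_law, mul1l. reflexivity. }
  assert (Hright : mul (mul a y) y = mul a (mul y y)).
  { rewrite <- (mul1r (mul (mul a y) y)), <- C_law, mul1r. reflexivity. }
  rewrite <- Hleft, C_law, Hright. reflexivity.
Qed.

Section MiddleNuclear.

Variable s : L.
Hypothesis s_mid : middle_nuclear s.

Lemma middle_nuclear_inv : middle_nuclear (inv s).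
Proof.
  intros a b. rewrite <- (mulKVl s b) at 1. rewrite <- s_mid, mulKVr. reflexivity.
Qed.

(* Both one-sided associativities follow from cancelling against the
   inverse of the unknown product, using [invM]. *)
Lemma middle_nuclear_left c w : mul s (mul c w) = mul (mul s c) w.
Proof.
  assert (H : mul (mul (inv c) (inv s)) (mul s (mul c w)) = w).
  { rewrite middle_nuclear_inv, !mulKl. reflexivity. }
  rewrite <- H at 2. rewrite <- invM, mulKVl. reflexivity.
Qed.

Lemma middle_nuclear_right w y : mul (mul w y) s = mul w (mul y s).
Proof.
  assert (H : mul (mul (mul w y) s) (mul (inv s) (inv y)) = w).
  { rewrite s_mid, mulKVl, mulKr. reflexivity. }
  rewrite <- H at 2. rewrite <- invM, mulKVr. reflexivity.
Qed.

End MiddleNuclear.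

Hypothesis flexible : forall x y, mul (mul x y) x = mul x (mul y x).

Lemma ARIF_law x y z :
  mul (mul z x) (mul (mul y x) y) = mul (mul z (mul (mul x y) x)) y.
Proof.
  pose (p := mul (mul x y) (mul x y)).
  assert (p_mid : middle_nuclear p) by apply square_middle_nuclear.
  assert (Hxy_l : mul x y = mul (mul (inv y) (inv x)) p)
    by (rewrite <- invM; symmetry; apply mulKl).
  assert (Hxy_r : mul x y = mul p (mul (inv y) (inv x)))
    by (rewrite <- invM; symmetry; apply mulKr).
  assert (Hyxy : mul (mul y x) y = mul (inv x) p).
  { rewrite flexible, Hxy_l, <- (middle_nuclear_right p p_mid), mulKVl. reflexivity. }
  assert (Hxyx : mul (mul x y) x = mul p (inv y)).
  { rewrite Hxy_r, (middle_nuclear_left p p_mid), mulKVr. reflexivity. }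
  rewrite Hyxy, Hxyx, <- (middle_nuclear_right p p_mid), <- p_mid, mulKr, mulKVr.
  reflexivity.
Qed.

End CLoop.

Theorem lemma4p3 (L : Type) (mul : L -> L -> L) (e : L) :
  is_C_loop mul e -> is_flexible mul e -> is_ARIF_loop mul e.
Proof.
  intros [[Hid [Hl Hr]] HC] [Hloop Hflex].
  split; [split; assumption |].
  pose (inv a := proj1_sig (constructive_indefinite_description _ (Hl a e))).
  assert (mulV : forall a, mul a (inv a) = e)
    by (intro a; exact (proj1 (proj2_sig (constructive_indefinite_description _ (Hl a e))))).
  assert (left_div : forall a b, exists x, mul a x = b)
    by (intros a b; destruct (Hl a b) as [c [Hc _]]; exists c; exact Hc).
  assert (right_div : forall a b, exists y, mul y a = b)
    by (intros a b; destruct (Hr a b) as [c [Hc _]]; exists c; exact Hc).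
  exact (ARIF_law L mul e inv (fun x => proj1 (Hid x)) (fun x => proj2 (Hid x))
           left_div right_div HC mulV Hflex).
Qed.
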